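(* Let $\mathcal A=\bigcup_{\xi<\kappa}\mathcal A_\xi$ where $(\mathcal A_\xi,\mu_\xi)_{\xi<\kappa}$ satisfy conditions (i)–(iv) below (with $\mathcal A_0,\mu_0$ as in the context being the $0$-th terms and the $\mathcal A_\xi$ increasing). Then $\mathcal A$ carries an almost strictly positive finitely additive probability measure, and the quotient $\mathcal A/\mathrm{fin}$ (by the ideal of finite subsets of $D$) is not $\sigma$-centred. The conditions are: (i) $|\mathcal A_\xi|<\kappa$; (ii) $\mu_\xi$ is an almost strictly positive finitely additive probability measure on $\mathcal A_\xi$; (iii) $\mu_\eta|\mathcal A_\xi=\mu_\xi$ for $\xi<\eta<\kappa$; (iv) for every $J\in\mathcal J$ there is $\varphi\in\omega^J$ with $X_\varphi(\mathcal S^J)\in\mathcal A$ and $D\setminus X_\varphi(\mathcal S^J)$ infinite.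
   Context: $\lambda$ is the product measure on $2^\omega$; $\mathcal E$ the ideal of $A\subseteq 2^\omega$ with $\lambda(\overline A)=0$; $\kappa_0=\mathrm{cov}(\mathcal E)$; $\kappa=\mathrm{cof}[\kappa_0]^{\le\omega}$ (least size of a family of countable subsets of $\kappa_0$ cofinal under inclusion). Fix a countable dense $D\subseteq 2^\omega$ and a bijection $d:\omega\to D$. $\mathcal A_0$ is the subalgebra of $P(D)$ generated by $\{C\cap D: C \text{ clopen}\}$ and the finite subsets of $D$; $\mu_0((C\cap D)\triangle F)=\lambda(C)$ for $C$ clopen, $F$ finite. A finitely additive measure on an algebra $\mathcal B\subseteq P(D)$ is almost strictly positive if it vanishes exactly on the finite members of $\mathcal B$. Fix closed $\lambda$-null $Z_\alpha\subseteq 2^\omega$ ($\alpha<\kappa_0$) covering $2^\omega$, write $Z_\alpha=\bigcap_k C_{\alpha,k}$ with $C_{\alpha,k}$ decreasing clopen, and let $S_\alpha(k)=(C_{\alpha,k}\cap D)\setminus\{d(0),\dots,d(k-1)\}$. $\mathcal J$ is a family of countable subsets of $\kappa_0$ of size $\kappa$ cofinal in $[\kappa_0]^{\le\omega}$; for $J\in\mathcal J$, $\mathcal S^J=\{S_\alpha:\alpha\in J\}$ and $X_\varphi(\mathcal S^J)=\bigcup_{\alpha\in J}S_\alpha(\varphi(\alpha))$ for $\varphi\in\omega^J$. A Boolean algebra is $\sigma$-centred if it is a countable union of centred families (families in which every finite subfamily has nonzero meet) of nonzero elements. *)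

From Stdlib Require Import Reals List Arith.
Import ListNotations.
Set Implicit Arguments.

Definition Cantor := nat -> bool.

(* A clopen subset of 2^omega is determined by a depth n and a pattern
   on the first n coordinates; every clopen set arises this way. *)
Record clopen := Clopen { cdepth : nat; cpat : list bool -> bool }.

Definition prefix (x : Cantor) (n : nat) : list bool := map x (seq 0 n).

Definition inC (C : clopen) (x : Cantor) : Prop :=
  cpat C (prefix x (cdepth C)) = true.

Fixpoint bitlists (n : nat) : list (list bool) :=
  match n with
  | O => [nil]
  | S m => map (cons false) (bitlists m) ++ map (cons true) (bitlists m)
  end.

Definition lam (C : clopen) : R :=
  (INR (length (filter (cpat C) (bitlists (cdepth C)))) / 2 ^ cdepth C)%R.

(* A is in the ideal E, i.e. lambda(closure A) = 0.  Since closure A is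
   compact, this holds iff A is covered by clopen sets of arbitrarily
   small measure. *)
Definition inE (A : Cantor -> Prop) : Prop :=
  forall eps : R, (0 < eps)%R ->
    exists C : clopen, (forall x, A x -> inC C x) /\ (lam C < eps)%R.

Definition card_le (A B : Type) : Prop :=
  exists f : A -> B, forall a b, f a = f b -> a = b.
Definition card_lt (A B : Type) : Prop := card_le A B /\ ~ card_le B A.

Definition is_cov_E (K0 : Type) : Prop :=
  (exists F : K0 -> Cantor -> Prop,
      (forall a, inE (F a)) /\ (forall x, exists a, F a x)) /\
  (forall (I : Type) (F : I -> Cantor -> Prop),
      (forall i, inE (F i)) -> (forall x, exists i, F i x) -> card_le K0 I).

Definition countable_sub (T : Type) (S : T -> Prop) : Prop :=
  exists f : nat -> option T, forall t, S t -> exists n, f n = Some t.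

Definition cofinal_countable (T I : Type) (F : I -> T -> Prop) : Prop :=
  (forall i, countable_sub (F i)) /\
  (forall S : T -> Prop, countable_sub S -> exists i, forall t, S t -> F i t).

Definition is_cof_countable (K0 Kap : Type) : Prop :=
  (exists F : Kap -> K0 -> Prop, cofinal_countable F) /\
  (forall (I : Type) (F : I -> K0 -> Prop), cofinal_countable F -> card_le Kap I).

(* (Kap, lt) is a well-order all of whose proper initial segments have
   cardinality < |Kap|, i.e. it is (isomorphic to) the initial ordinal |Kap|. *)
Definition initial_ordinal (Kap : Type) (lt : Kap -> Kap -> Prop) : Prop :=
  well_founded lt /\
  (forall x y z, lt x y -> lt y z -> lt x z) /\
  (forall x y, lt x y \/ x = y \/ lt y x) /\
  (forall xi : Kap, card_lt {eta : Kap | lt eta xi} Kap).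

(** * Subsets of D, identified with subsets of omega via d *)
Definition Sub := nat -> Prop.

Definition finite (X : Sub) : Prop := exists N, forall n, X n -> (n < N)%nat.
Definition infinite (X : Sub) : Prop := ~ finite X.

Definition symdiff (X Y : Sub) : Sub := fun n => ~ (X n <-> Y n).

Definition is_algebra (B : Sub -> Prop) : Prop :=
  B (fun _ => True) /\
  (forall X, B X -> B (fun n => ~ X n)) /\
  (forall X Y, B X -> B Y -> B (fun n => X n \/ Y n)).

Definition fa_prob (B : Sub -> Prop) (mu : Sub -> R) : Prop :=
  mu (fun _ => True) = 1%R /\
  (forall X, B X -> (0 <= mu X)%R) /\
  (forall X Y, B X -> B Y -> (forall n, ~ (X n /\ Y n)) ->
     mu (fun n => X n \/ Y n) = (mu X + mu Y)%R).

Definition almost_strictly_positive (B : Sub -> Prop) (mu : Sub -> R) : Prop :=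
  forall X, B X -> (mu X = 0%R <-> finite X).

(* B / fin is sigma-centred: its nonzero elements (classes of infinite
   members of B) are a countable union of centred families, the meet of
   classes being the class of the intersection. *)
Definition sigma_centred_mod_fin (B : Sub -> Prop) : Prop :=
  exists Cn : nat -> Sub -> Prop,
    (forall n X, Cn n X -> B X /\ infinite X) /\
    (forall X, B X -> infinite X -> exists n, Cn n X) /\
    (forall n (l : list Sub), (forall X, In X l -> Cn n X) ->
        infinite (fun m => forall X, In X l -> X m)).

Definition trace (d : nat -> Cantor) (C : clopen) : Sub := fun n => inC C (d n).

Definition A0_mem (d : nat -> Cantor) (X : Sub) : Prop :=
  exists (C : clopen) (F : Sub), finite F /\ X = symdiff (trace d C) F.

(* X_phi(S^J) = union_{a in J} S_a(phi a),
   S_a(k) = (C_{a,k} ∩ D) \ {d 0, ..., d (k-1)} *)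
Definition Xphi (d : nat -> Cantor) (K0 : Type) (Cz : K0 -> nat -> clopen)
  (J : K0 -> Prop) (phi : K0 -> nat) : Sub :=
  fun n => exists a, J a /\ (phi a <= n)%nat /\ inC (Cz a (phi a)) (d n).

(* The measure is the common extension of the compatible measures along the
   chain.  For the second claim, suppose the nonzero part of A/fin were the
   union of centred families F_n.  By compactness of 2^omega each F_n has an
   accumulation point x_n: every finite meet of members of F_n meets D in
   infinitely many points near x_n.  Each x_n lies in some Z_{a_n}; choose
   J in the cofinal family containing all a_n and phi as in (iv), and let Y
   be the complement of X_phi(S^J).  Y is infinite, so it belongs to some F_n,
   yet the clopen neighbourhood C_{a_n, phi(a_n)} of x_n meets Y in finitely
   many points of D, because beyond phi(a_n) it lies inside X_phi(S^J). *)

From Stdlib Require Import Reals List Arith.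
From Stdlib Require Import Classical ClassicalEpsilon Lia.
Import ListNotations.
Set Implicit Arguments.

Lemma finite_subset (P Q : Sub) : (forall m, P m -> Q m) -> finite Q -> finite P.
Proof. intros H [N HN]. exists N. intros n Hn. apply HN, H, Hn. Qed.

Lemma finite_union (P Q S : Sub) : finite P -> finite Q ->
  (forall m, S m -> P m \/ Q m) -> finite S.
Proof.
  intros [N1 H1] [N2 H2] H. exists (N1 + N2). intros n Hn.
  destruct (H n Hn) as [h|h]; [specialize (H1 n h)|specialize (H2 n h)]; lia.
Qed.

Lemma prefix_S (x : Cantor) k : prefix x (S k) = prefix x k ++ [x k].
Proof. unfold prefix. rewrite seq_S, map_app. reflexivity. Qed.

Lemma inC_prefix (C : clopen) (x y : Cantor) :
  prefix x (cdepth C) = prefix y (cdepth C) -> inC C x -> inC C y.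
Proof. unfold inC. intros ->. trivial. Qed.

Definition chain_union (I : Type) (Alg : I -> Sub -> Prop) (X : Sub) : Prop :=
  exists i, Alg i X.

Section ChainUnion.

Variables (I : Type) (lt : I -> I -> Prop).
Variables (Alg : I -> Sub -> Prop) (mu : I -> Sub -> R).
Hypothesis lt_total : forall i j, lt i j \/ i = j \/ lt j i.
Hypothesis Alg_mono : forall i j, lt i j -> forall X, Alg i X -> Alg j X.
Hypothesis mu_compat : forall i j, lt i j -> forall X, Alg i X -> mu j X = mu i X.

Lemma chain_common_bound i j X Y :
  Alg i X -> Alg j Y -> exists k, Alg k X /\ Alg k Y.
Proof.
  intros HX HY. destruct (lt_total i j) as [h|[<-|h]].
  - exists j. split; [exact (Alg_mono h HX)|exact HY].
  - exists i. split; assumption.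
  - exists i. split; [exact HX|exact (Alg_mono h HY)].
Qed.

Lemma chain_mu_agree i j X : Alg i X -> Alg j X -> mu i X = mu j X.
Proof.
  intros Hi Hj. destruct (lt_total i j) as [h|[<-|h]].
  - symmetry. exact (mu_compat h Hi).
  - reflexivity.
  - exact (mu_compat h Hj).
Qed.

(* Outside the union the value is irrelevant; we take 0. *)
Definition chain_mu (X : Sub) : R :=
  match excluded_middle_informative (chain_union Alg X) with
  | left h => mu (proj1_sig (constructive_indefinite_description _ h)) X
  | right _ => 0%R
  end.

Lemma chain_muE i X : Alg i X -> chain_mu X = mu i X.
Proof.
  intro HX. unfold chain_mu.
  destruct (excluded_middle_informative _) as [h|h].
  - apply chain_mu_agree; [exact (proj2_sig (constructive_indefinite_description _ h))|exact HX].
  - exfalso. exact (h (ex_intro _ i HX)).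
Qed.

Lemma chain_fa_prob (i0 : I) :
  (forall i, is_algebra (Alg i)) -> (forall i, fa_prob (Alg i) (mu i)) ->
  fa_prob (chain_union Alg) chain_mu.
Proof.
  intros Halg Hmu. split; [|split].
  - destruct (Halg i0) as [HT _], (Hmu i0) as [H1 _].
    rewrite (chain_muE HT). exact H1.
  - intros X [i HX]. rewrite (chain_muE HX). apply (Hmu i), HX.
  - intros X Y [i HX] [j HY] Hdisj.
    destruct (chain_common_bound HX HY) as [k [HXk HYk]].
    destruct (Halg k) as [_ [_ HU]], (Hmu k) as [_ [_ Hadd]].
    rewrite (chain_muE (HU _ _ HXk HYk)), (chain_muE HXk), (chain_muE HYk).
    exact (Hadd X Y HXk HYk Hdisj).
Qed.

Lemma chain_almost_strictly_positive :
  (forall i, almost_strictly_positive (Alg i) (mu i)) ->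
  almost_strictly_positive (chain_union Alg) chain_mu.
Proof. intros Hpos X [i HX]. rewrite (chain_muE HX). exact (Hpos i X HX). Qed.

End ChainUnion.

Definition centred (F : Sub -> Prop) : Prop :=
  forall l, (forall X, In X l -> F X) -> infinite (fun m => forall X, In X l -> X m).

Section AccumulationPoint.

Variables (d : nat -> Cantor) (F : Sub -> Prop).

Definition centred_at (p : list bool) : Prop :=
  forall l, (forall X, In X l -> F X) ->
    infinite (fun m => prefix (d m) (length p) = p /\ forall X, In X l -> X m).

Definition accumulation_point (x : Cantor) : Prop :=
  forall k l, (forall X, In X l -> F X) ->
    infinite (fun m => prefix (d m) k = prefix x k /\ forall X, In X l -> X m).

Lemma centred_at_nil : centred F -> centred_at [].
Proof.
  intros HF l Hl Hfin. apply (HF l Hl). eapply finite_subset; [|exact Hfin].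
  intros m Hm. split; [reflexivity|exact Hm].
Qed.

(* If both halves failed, witnessed by lists l0 and l1, then l0 ++ l1 would
   fail on p. *)
Lemma centred_at_snoc p :
  centred_at p -> centred_at (p ++ [false]) \/ centred_at (p ++ [true]).
Proof.
  intro Hp. apply NNPP. intros [H0 H1]%not_or_and.
  apply not_all_ex_not in H0 as [l0 H0], H1 as [l1 H1].
  apply imply_to_and in H0 as [Hl0 F0%NNPP], H1 as [Hl1 F1%NNPP].
  apply (Hp (l0 ++ l1)).
  { intros X [HX|HX]%in_app_or; auto. }
  eapply finite_union; [exact F0|exact F1|]. intros m [Hpre Hl].
  rewrite !length_app; cbn [length]; rewrite !Nat.add_1_r, prefix_S, Hpre.
  destruct (d m (length p)); [right|left];
    (split; [reflexivity|intros X HX; apply Hl, in_or_app; auto]).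
Qed.

Definition next_bit (p : list bool) : bool :=
  if excluded_middle_informative (centred_at (p ++ [false])) then false else true.

Lemma centred_at_next_bit p : centred_at p -> centred_at (p ++ [next_bit p]).
Proof.
  intro Hp. unfold next_bit.
  destruct (excluded_middle_informative _) as [h|h]; [exact h|].
  destruct (centred_at_snoc Hp); tauto.
Qed.

Fixpoint branch (k : nat) : list bool :=
  match k with O => [] | S k => branch k ++ [next_bit (branch k)] end.

Lemma branch_length k : length (branch k) = k.
Proof. induction k as [|k IH]; simpl; [reflexivity|]. rewrite length_app, IH. simpl. lia. Qed.

Lemma centred_at_branch k : centred F -> centred_at (branch k).
Proof.
  intro HF. induction k as [|k IH]; [exact (centred_at_nil HF)|].
  exact (centred_at_next_bit IH).
Qed.

Lemma centred_accumulation_point : centred F -> exists x, accumulation_point x.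
Proof.
  intro HF. exists (fun k => next_bit (branch k)).
  assert (Hpre : forall k, prefix (fun k => next_bit (branch k)) k = branch k).
  { induction k as [|k IH]; [reflexivity|]. rewrite prefix_S, IH. reflexivity. }
  intros k l Hl. rewrite Hpre.
  pose proof (centred_at_branch k HF l Hl) as H. rewrite branch_length in H. exact H.
Qed.

Lemma accumulation_point_clopen x (C : clopen) Y :
  accumulation_point x -> F Y -> inC C x -> infinite (fun m => Y m /\ inC C (d m)).
Proof.
  intros Hx HY HC Hfin. apply (Hx (cdepth C) [Y]).
  { intros X [<-|[]]. exact HY. }
  eapply finite_subset; [|exact Hfin]. intros m [Hpre Hl]. split.
  - apply Hl. left. reflexivity.
  - eapply inC_prefix; [exact (eq_sym Hpre)|exact HC].
Qed.

End AccumulationPoint.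

Lemma Xphi_complement_near (d : nat -> Cantor) (K0 : Type) (Cz : K0 -> nat -> clopen)
  (J : K0 -> Prop) (phi : K0 -> nat) (a : K0) :
  J a -> finite (fun m => ~ Xphi d Cz J phi m /\ inC (Cz a (phi a)) (d m)).
Proof.
  intro Ha. exists (phi a). intros m [Hout HC].
  destruct (Nat.lt_ge_cases m (phi a)) as [h|h]; [exact h|].
  exfalso. apply Hout. exists a. auto.
Qed.

Lemma Xphi_not_sigma_centred (d : nat -> Cantor) (K0 : Type) (Cz : K0 -> nat -> clopen)
  (IJ : Type) (Jf : IJ -> K0 -> Prop) (A : Sub -> Prop) :
  (forall x, exists a, forall k, inC (Cz a k) x) ->
  cofinal_countable Jf ->
  (forall j, exists phi, A (fun m => ~ Xphi d Cz (Jf j) phi m) /\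
                         infinite (fun m => ~ Xphi d Cz (Jf j) phi m)) ->
  ~ sigma_centred_mod_fin A.
Proof.
  intros Hcover [_ Hcof] HX [F [_ [HF Hcentred]]].
  destruct (choice _ (fun n => centred_accumulation_point d (Hcentred n)))
    as [x Hx].
  destruct (choice _ (fun n => Hcover (x n))) as [a Ha].
  destruct (Hcof (fun b => exists n, b = a n)) as [j Hj].
  { exists (fun n => Some (a n)). intros b [n ->]. exists n. reflexivity. }
  destruct (HX j) as [phi [HY Hinf]].
  destruct (HF _ HY Hinf) as [n Hn].
  eapply accumulation_point_clopen; [exact (Hx n)|exact Hn|exact (Ha n (phi (a n)))|].
  apply Xphi_complement_near, Hj. exists n. reflexivity.
Qed.

Theorem lemma3p2
  (d : nat -> Cantor)
  (Hd_inj : forall m n, d m = d n -> m = n)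
  (Hd_dense : forall C : clopen, (exists x, inC C x) -> exists n, inC C (d n))
  (K0 : Type) (Hcov : is_cov_E K0)
  (Cz : K0 -> nat -> clopen)
  (Cz_dec : forall a k x, inC (Cz a (S k)) x -> inC (Cz a k) x)
  (Cz_null : forall a, inE (fun x => forall k, inC (Cz a k) x))
  (Cz_cover : forall x, exists a, forall k, inC (Cz a k) x)
  (Kap : Type) (ltK : Kap -> Kap -> Prop)
  (Hord : initial_ordinal ltK) (Hkap : is_cof_countable K0 Kap)
  (z0 : Kap) (Hz0 : forall xi, ~ ltK xi z0)
  (IJ : Type) (Jf : IJ -> K0 -> Prop)
  (HJcof : cofinal_countable Jf) (HJsize : card_le IJ Kap /\ card_le Kap IJ)
  (Alg : Kap -> Sub -> Prop) (mu : Kap -> Sub -> R)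
  (H0alg : forall X, Alg z0 X <-> A0_mem d X)
  (H0mu : forall (C : clopen) (F : Sub), finite F -> mu z0 (symdiff (trace d C) F) = lam C)
  (Hinc : forall xi eta, ltK xi eta -> forall X, Alg xi X -> Alg eta X)
  (Hi : forall xi, card_lt {X : Sub | Alg xi X} Kap)
  (Hii : forall xi, is_algebra (Alg xi) /\ fa_prob (Alg xi) (mu xi) /\
                    almost_strictly_positive (Alg xi) (mu xi))
  (Hiii : forall xi eta, ltK xi eta -> forall X, Alg xi X -> mu eta X = mu xi X)
  (Hiv : forall j : IJ, exists phi : K0 -> nat,
           (exists xi, Alg xi (Xphi d Cz (Jf j) phi)) /\
           infinite (fun n => ~ Xphi d Cz (Jf j) phi n)) :
  let A := fun X : Sub => exists xi, Alg xi X in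
  (exists nu : Sub -> R, fa_prob A nu /\ almost_strictly_positive A nu) /\
  ~ sigma_centred_mod_fin A.
Proof.
  intro A.
  destruct Hord as [_ [_ [Htotal _]]].
  split.
  - exists (chain_mu Alg mu). split.
    + apply (chain_fa_prob ltK Alg mu Htotal Hinc Hiii z0); apply Hii.
    + apply (chain_almost_strictly_positive ltK mu Htotal Hiii). apply Hii.
  - apply (Xphi_not_sigma_centred (d := d) Cz_cover HJcof).
    intro j. destruct (Hiv j) as [phi [[xi HX] Hinf]].
    exists phi. split; [|exact Hinf].
    exists xi. apply (Hii xi), HX.
Qed.
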